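(* Let $G$ be a finite, non-empty, connected, simple undirected graph, and run the Greedy Radial Partitioning procedure described in the context on $G$. Then the procedure terminates, the sets $\mathcal V_1,\ldots,\mathcal V_m$ it returns form a partition of the vertex set of $G$, and for each $k$ the subgraph of $G$ induced by $\mathcal V_k$ is a tree.
   Context: Greedy Radial Partitioning procedure. Set $k=1$ and let $H:=G$. START: set $\mathcal V_k=\emptyset$ and let $S$ be an empty stack whose entries are pairs (node, parent). Select an arbitrary (e.g. random) node $v$ of $H$, set $\mathcal V_k\gets\{v\}$, and push every neighbor of $v$ in $H$ onto $S$ with parent $v$. While $S$ is non-empty: pop an entry $(u,p)$ from $S$; if no neighbor of $u$ in $H$ other than its parent $p$ belongs to $\mathcal V_k$, then set $\mathcal V_k\gets\mathcal V_k\cup\{u\}$ and push every neighbor of $u$ in $H$ that is not in $\mathcal V_k$ onto $S$ with parent $u$. When $S$ is empty, save $\mathcal V_k$ as a part, delete the vertices of $\mathcal V_k$ from $H$ (i.e. replace $H$ by the subgraph induced on the remaining vertices); if $H$ is non-empty, set $k\gets k+1$ and go to START; otherwise return all saved sets $\mathcal V_1,\ldots,\mathcal V_m$. A partition of the vertex set in which each part induces a tree is called a radial partitioning. *)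

From mathcomp Require Import all_boot.
Set Implicit Arguments. Unset Strict Implicit. Unset Printing Implicit Defensive.

(* A finite simple undirected graph is a finType T of vertices with an
   edge relation e : rel T that is symmetric and irreflexive. *)

Section GRP.
Variables (T : finType) (e : rel T).

Definition induced (X : {set T}) : rel T :=
  [rel x y | [&& x \in X, y \in X & e x y]].

Definition induced_connected (X : {set T}) : Prop :=
  forall x y, x \in X -> y \in X -> connect (induced X) x y.

Definition induced_acyclic (X : {set T}) : Prop :=
  forall c : seq T, {subset c <= X} -> uniq c -> 3 <= size c -> ~~ cycle e c.

Definition induced_tree (X : {set T}) : Prop :=
  X != set0 /\ induced_connected X /\ induced_acyclic X.

(* State of the Greedy Radial Partitioning procedure:
   - saved parts V_1..V_(k-1) (in order),
   - the vertex set of the current graph H,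
   - None when at START, or Some (V_k, S) while running the inner loop;
     the stack S is a list of (node, parent) pairs whose head is the top. *)
Record grp_state := GRPState {
  gs_parts : seq {set T};
  gs_H : {set T};
  gs_cur : option ({set T} * seq (T * T))
}.

Definition nbrs (H : {set T}) (u : T) : {set T} := [set w in H | e u w].

(* Non-determinism: the choice of the start
   node v, and the (arbitrary) order in which neighbours are pushed onto
   the stack (any duplicate-free enumeration [s] of the set to push). *)
Inductive grp_step : grp_state -> grp_state -> Prop :=
| grp_start (ps : seq {set T}) (H : {set T}) (v : T) (s : seq T) :
    v \in H ->
    perm_eq s (enum (nbrs H v)) ->
    grp_step (GRPState ps H None)
             (GRPState ps H (Some ([set v], [seq (w, v) | w <- s])))
| grp_pop_add (ps : seq {set T}) (H V : {set T}) (u p : T) (S : seq (T * T)) (s : seq T) :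
    [forall w, ((w \in nbrs H u) && (w != p)) ==> (w \notin V)] ->
    perm_eq s (enum [set w in nbrs H u | w \notin u |: V]) ->
    grp_step (GRPState ps H (Some (V, (u, p) :: S)))
             (GRPState ps H (Some (u |: V, [seq (w, u) | w <- s] ++ S)))
| grp_pop_skip (ps : seq {set T}) (H V : {set T}) (u p : T) (S : seq (T * T)) :
    ~~ [forall w, ((w \in nbrs H u) && (w != p)) ==> (w \notin V)] ->
    grp_step (GRPState ps H (Some (V, (u, p) :: S)))
             (GRPState ps H (Some (V, S)))
| grp_save (ps : seq {set T}) (H V : {set T}) :
    grp_step (GRPState ps H (Some (V, [::])))
             (GRPState (rcons ps V) (H :\: V) None).

Definition grp_init : grp_state := GRPState [::] [set: T] None.

Definition grp_final (st : grp_state) : bool :=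
  (gs_H st == set0) && (gs_cur st == None).

Inductive grp_reach : grp_state -> grp_state -> Prop :=
| grp_reach_refl st : grp_reach st st
| grp_reach_step st1 st2 st3 :
    grp_step st1 st2 -> grp_reach st2 st3 -> grp_reach st1 st3.

End GRP.

From mathcomp Require Import all_boot zify.

(* A node is accepted only when its parent is its sole neighbour in the
   current part V_k, so it is attached to V_k as a leaf and V_k stays an
   induced tree.  An entry whose node joined V_k after it was pushed has two
   distinct neighbours in V_k when popped (its parent and the one it was
   accepted through) and is rejected, so every accepted node is new.  Each
   saved part is non-empty and removed from H, which yields the partition.
   The procedure terminates because the triple (|H|, |H \ V_k|, |S|) decreases
   lexicographically, the stack holding distinct pairs of vertices. *)

Set Implicit Arguments. Unset Strict Implicit.

Lemma acc_measure (A : Type) (R : A -> A -> Prop) (P : A -> Prop) (f : A -> nat) :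
  (forall x y, P x -> R y x -> P y /\ f y < f x) -> forall x, P x -> Acc R x.
Proof.
move=> dec x; have [n] := ubnP (f x); elim: n x => [//|n IHn x lt_fx Px].
constructor=> y Ryx; have [Py lt_fy] := dec x y Px Ryx.
exact: IHn (leq_trans lt_fy lt_fx) Py.
Qed.

Section InducedTree.
Variables (T : finType) (e : rel T).
Hypothesis e_sym : symmetric e.

Lemma induced_tree_set1 v : induced_tree e [set v].
Proof.
split; first by apply/set0Pn; exists v; rewrite set11.
split=> [x y|c c_v uniq_c]; first by rewrite !inE => /eqP-> /eqP->.
have : size c <= size [:: v].
  by apply: uniq_leq_size => // x /c_v; rewrite inE mem_seq1.
by case: c {c_v uniq_c} => [|? []].
Qed.

Lemma induced_connected_setU1 V u p :
  induced_connected e V -> p \in V -> e p u -> induced_connected e (u |: V).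
Proof.
move=> conV pV epu.
have sym_uV : connect_sym (induced e (u |: V)).
  by apply: sym_connect_sym => x y; rewrite /induced /= andbCA e_sym.
have to_p x : x \in u |: V -> connect (induced e (u |: V)) x p.
  case/setU1P=> [->|xV].
    by apply: connect1; rewrite /induced /= setU11 setU1r // e_sym.
  apply: connect_sub (conV x p xV pV) => a b /and3P[aV bV eab].
  by apply: connect1; rewrite /induced /= !setU1r.
by move=> x y xuV yuV; rewrite (connect_trans (to_p x xuV)) // sym_uV to_p.
Qed.

Lemma induced_acyclic_setU1 V u p :
  induced_acyclic e V -> {in V, forall w, e u w -> w = p} ->
  induced_acyclic e (u |: V).
Proof.
move=> acyV leaf c c_uV uniq_c size_c; apply/negP => cyc_c.
have [uc|] := boolP (u \in c); last first.
  move=> u'c; apply/negP: cyc_c; apply: acyV => // x xc.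
  by have /setU1P[xu|] := c_uV x xc; first by rewrite -xu xc in u'c.
case/rot_to: uc => i d rot_c.
have := rot_cycle i e c; rewrite cyc_c rot_c => cyc_d.
have := rot_uniq i c; rewrite uniq_c rot_c => uniq_d.
have d_V x : x \in d -> x \in V.
  move=> xd; have : x \in rot i c by rewrite rot_c inE xd orbT.
  rewrite mem_rot => /c_uV /setU1P[xu|//].
  by move: uniq_d; rewrite /= -xu xd.
have := size_rot i c; rewrite rot_c => size_d.
(* Both cycle-neighbours of u lie in V, so the leaf condition forces them to
   be the same vertex. *)
case: d {rot_c} d_V cyc_d uniq_d size_d => [|x [|y r]] d_V cyc_d uniq_d size_d;
  try by rewrite -size_d in size_c.
move: cyc_d uniq_d; rewrite /= rcons_path => /and4P[eux _ _ elu] /and4P[_ x'yr _ _].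
have lr : last y r \in y :: r by apply: mem_last.
have xp : x = p by apply: leaf => //; apply: d_V; rewrite mem_head.
have lp : last y r = p.
  by apply: leaf; [apply: d_V; rewrite inE lr orbT | rewrite e_sym].
by rewrite xp -lp lr in x'yr.
Qed.

Lemma induced_tree_setU1 V u p :
  induced_tree e V -> p \in V -> e p u -> {in V, forall w, e u w -> w = p} ->
  induced_tree e (u |: V).
Proof.
move=> [_ [conV acyV]] pV epu leaf.
split; first by apply/set0Pn; exists u; rewrite setU11.
split; first exact: induced_connected_setU1 pV epu.
exact: induced_acyclic_setU1 leaf.
Qed.

End InducedTree.

Section GreedyRadialPartitioning.
Variables (T : finType) (e : rel T).
Hypotheses (e_sym : symmetric e) (e_irr : irreflexive e).

(* The last clause ensures that an entry whose node has joined V since it was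
   pushed fails the test when popped. *)
Definition search_inv (H V : {set T}) (S : seq (T * T)) : Prop :=
  [/\ V \subset H, induced_tree e V, uniq S,
      forall u p, (u, p) \in S -> [&& p \in V, u \in H & e p u] &
      forall u p, (u, p) \in S -> u \in V -> exists2 w, w \in V & (w != p) && e u w].

Definition parts_inv (ps : seq {set T}) (H : {set T}) : Prop :=
  [/\ uniq ps, {in ps, forall X, induced_tree e X},
      trivIset [set X in ps] & cover [set X in ps] = ~: H].

Definition grp_inv (st : grp_state T) : Prop :=
  parts_inv (gs_parts st) (gs_H st) /\
  if gs_cur st is Some (V, stack) then search_inv (gs_H st) V stack else True.

Lemma pop_testP (H V : {set T}) u p : V \subset H ->
  reflect {in V, forall w, e u w -> w = p}
          [forall w, ((w \in nbrs e H u) && (w != p)) ==> (w \notin V)].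
Proof.
move=> VH; apply: (iffP forallP) => [test w wV euw | leaf w].
  apply/eqP; apply: contraTT (test w) => w'p.
  by rewrite /nbrs !inE (subsetP VH w wV) euw w'p wV.
rewrite /nbrs inE; apply/implyP => /andP[/andP[_ euw]]; apply: contra => wV.
by rewrite (leaf w wV euw).
Qed.

Lemma search_inv_pop_fresh (H V : {set T}) u p S :
  search_inv H V ((u, p) :: S) -> {in V, forall w, e u w -> w = p} -> u \notin V.
Proof.
move=> [_ _ _ _ stale] leaf; apply/negP => uV.
have [w wV /andP[/negP w'p euw]] := stale u p (mem_head _ _) uV.
exact/w'p/eqP/leaf.
Qed.

Lemma search_inv_start (H : {set T}) v s :
  v \in H -> perm_eq s (enum (nbrs e H v)) ->
  search_inv H [set v] [seq (w, v) | w <- s].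
Proof.
move=> vH perm_s.
have mem_s w : (w \in s) = (w \in H) && e v w.
  by rewrite (perm_mem perm_s) mem_enum inE.
split=> [||||u p /mapP[w ws [-> ->]]].
- by rewrite sub1set.
- exact: induced_tree_set1.
- by rewrite map_inj_uniq ?(perm_uniq perm_s) ?enum_uniq // => w1 w2 [].
- by move=> u p /mapP[w ws [-> ->]]; rewrite set11 -mem_s.
- by rewrite inE => /eqP wv; move: ws; rewrite mem_s wv e_irr andbF.
Qed.

Lemma search_inv_push (H V : {set T}) u p S s :
  search_inv H V ((u, p) :: S) -> {in V, forall w, e u w -> w = p} ->
  perm_eq s (enum [set w in nbrs e H u | w \notin u |: V]) ->
  search_inv H (u |: V) ([seq (w, u) | w <- s] ++ S).
Proof.
move=> inv_S leaf perm_s; have u'V := search_inv_pop_fresh inv_S leaf.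
case: inv_S => VH treeV; rewrite cons_uniq => /andP[up'S uniq_S] parent stale.
have /and3P[pV uH epu] := parent u p (mem_head _ _).
have mem_s w : (w \in s) = [&& w \in H, e u w & w \notin u |: V].
  by rewrite (perm_mem perm_s) mem_enum !inE andbA.
have old_entry a b : (a, b) \in S -> (a, b) \in (u, p) :: S.
  by move=> abS; rewrite inE abS orbT.
split.
- by rewrite subUset sub1set uH VH.
- exact: induced_tree_setU1 treeV pV epu leaf.
- rewrite cat_uniq map_inj_uniq ?(perm_uniq perm_s) ?enum_uniq; last first.
    by move=> w1 w2 [].
  rewrite uniq_S andbT /=; apply/hasPn => -[a b] abS; apply/mapP => -[w _ [_ bu]].
  have /and3P[bV _ _] := parent a b (old_entry a b abS).
  by rewrite -bu bV in u'V.
- move=> a b; rewrite mem_cat => /orP[/mapP[w ws [-> ->]]|abS].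
    by move: ws; rewrite mem_s setU11 => /and3P[-> -> _].
  by have /and3P[bV -> ->] := parent a b (old_entry a b abS); rewrite setU1r.
- move=> a b; rewrite mem_cat => /orP[/mapP[w ws [-> ->]]|abS].
    by move=> wuV; move: ws; rewrite mem_s wuV !andbF.
  case/setU1P=> [au|aV]; last first.
    have [w wV w'b] := stale a b (old_entry a b abS) aV.
    by exists w; rewrite ?setU1r.
  exists p; first by rewrite setU1r.
  rewrite au e_sym epu andbT; apply: contraNneq up'S => pb.
  by rewrite pb -au.
Qed.

Lemma search_inv_behead (H V : {set T}) up S :
  search_inv H V (up :: S) -> search_inv H V S.
Proof.
move=> [VH treeV /andP[_ uniq_S] parent stale].
by split=> // a b abS; [apply: parent | apply: stale]; rewrite inE abS orbT.
Qed.

Lemma parts_inv_save ps (H V : {set T}) :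
  parts_inv ps H -> V \subset H -> induced_tree e V ->
  parts_inv (rcons ps V) (H :\: V).
Proof.
move=> [uniq_ps trees triv cover_ps] VH treeV.
have set_rcons : [set X in rcons ps V] = V |: [set X in ps].
  by apply/setP => X; rewrite !inE mem_rcons inE.
have no_set0 : set0 \notin [set X in ps].
  by rewrite inE; apply/negP => /trees[]; rewrite eqxx.
have V_disj : {in [set X in ps], forall X : {set T}, [disjoint V & X]}.
  move=> X Xps; apply: disjointWr (_ : X \subset ~: H) _.
    by rewrite -cover_ps; apply: bigcup_sup.
  by rewrite -subsets_disjoint.
have [triv' V'ps] := trivIsetU1 V_disj triv no_set0.
split.
- by rewrite rcons_uniq uniq_ps andbT; rewrite inE in V'ps.
- by move=> X; rewrite mem_rcons inE => /predU1P[->|/trees].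
- by rewrite set_rcons.
- by rewrite set_rcons /cover big_setU1 //= -/(cover _) cover_ps setCD setUC.
Qed.

Lemma grp_inv_init : grp_inv (grp_init T).
Proof.
split=> //; split=> //.
  by rewrite /trivIset /cover !big_pred0 ?cards0 // => X; rewrite inE.
by rewrite setCT /cover big_pred0 // => X; rewrite inE.
Qed.

Lemma grp_inv_step st st' : grp_step e st st' -> grp_inv st -> grp_inv st'.
Proof.
case=> {st st'} [ps H v s vH perm_s | ps H V u p S s test perm_s |
                 ps H V u p S _ | ps H V] [inv_ps inv_S] //=; split=> //.
- exact: search_inv_start.
- have [VH _ _ _ _] := inv_S.
  exact: search_inv_push inv_S (elimT (pop_testP _ _ VH) test) perm_s.
- exact: search_inv_behead inv_S.
- by have [VH treeV _ _ _] := inv_S; apply: parts_inv_save.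
Qed.

Lemma grp_reach_inv st st' : grp_reach e st st' -> grp_inv st -> grp_inv st'.
Proof. by elim=> // st1 st2 st3 step _ IH /(grp_inv_step step). Qed.

Lemma grp_progress st : grp_final st \/ exists st', grp_step e st st'.
Proof.
case: st => ps H [[V [|[u p] S]]|].
- by right; eexists; apply: grp_save.
- right; case: (boolP [forall w, ((w \in nbrs e H u) && (w != p)) ==> (w \notin V)]).
    by eexists; apply: grp_pop_add; last exact: perm_refl.
  by eexists; apply: grp_pop_skip.
- have [->|[v vH]] := set_0Vmem H; first by left; rewrite /grp_final /= !eqxx.
  by right; eexists; apply: grp_start vH (perm_refl _).
Qed.

(* Encodes the lexicographic order on (|H|, |H \ V|, |S|): a duplicate-free
   stack has at most #|T * T| entries, so it never outweighs one vertex. *)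
Definition grp_measure (st : grp_state T) : nat :=
  let N := #|{: T * T}|.+2 in
  if gs_cur st is Some (V, stack) then #|gs_H st :\: V| * N + (size stack).+1
  else #|gs_H st| * N.

Lemma size_uniq_stack (S : seq (T * T)) : uniq S -> size S <= #|{: T * T}|.
Proof. by move=> /card_uniqP <-; apply: max_card. Qed.

Lemma grp_measure_step st st' :
  grp_step e st st' -> grp_inv st -> grp_inv st' -> grp_measure st' < grp_measure st.
Proof.
case=> {st st'} [ps H v s vH _ | ps H V u p S s test _ | ps H V u p S _ | ps H V]
  [_ inv_S] [_ inv_S'] /=; rewrite /grp_measure /=.
- have [_ _ /size_uniq_stack size_S _ _] := inv_S'.
  rewrite (cardsD1 v H) vH; nia.
- have [VH _ _ parent _] := inv_S; have [_ _ /size_uniq_stack size_S _ _] := inv_S'.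
  have u'V := search_inv_pop_fresh inv_S (elimT (pop_testP _ _ VH) test).
  have /and3P[_ uH _] := parent u p (mem_head _ _).
  rewrite (cardsD1 u (H :\: V)) setDDl setUC !inE u'V uH; nia.
- by rewrite ltn_add2l.
- by rewrite addnS ltnS leq_addr.
Qed.

Lemma grp_acc st : grp_inv st -> Acc (fun st' st => grp_step e st st') st.
Proof.
apply: (acc_measure (f := grp_measure)) => st1 st2 inv1 step.
have inv2 := grp_inv_step step inv1.
by split; last exact: grp_measure_step.
Qed.

End GreedyRadialPartitioning.

Theorem theorem1 (T : finType) (e : rel T)
  (e_sym : symmetric e) (e_irr : irreflexive e)
  (T_nonempty : 0 < #|T|)
  (G_connected : forall x y : T, connect e x y) :
  (* termination: there is no infinite run *)
  Acc (fun st' st => grp_step e st st') (grp_init T) /\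
  (* the procedure never gets stuck before returning *)
  (forall st, grp_reach e (grp_init T) st ->
     grp_final st \/ exists st', grp_step e st st') /\
  (* correctness of every returned output V_1, ..., V_m *)
  (forall ps : seq {set T},
     grp_reach e (grp_init T) (GRPState ps set0 None) ->
     uniq ps /\ partition [set X in ps] [set: T] /\
     (forall X, X \in ps -> induced_tree e X)).
Proof.
have inv_init := grp_inv_init e.
split; first exact: (grp_acc e_sym e_irr inv_init).
split=> [st _|ps]; first exact: grp_progress.
move=> /(grp_reach_inv e_sym e_irr)/(_ inv_init) [[uniq_ps trees triv cover_ps] _].
split=> //; split=> //.
rewrite /partition triv cover_ps setC0 eqxx inE /=.
by apply/negP => /trees[]; rewrite eqxx.
Qed.
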